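(* Let $(A,\succ,\prec)$ be a finite-dimensional dendriform algebra with associated product $x*y=x\succ y+x\prec y$, and let $r\in A\otimes A$ be symmetric and nondegenerate (i.e. the induced map $r:A^*\to A$ is bijective). Define $\mathcal B(x,y)=\langle r^{-1}(x),y\rangle$ for $x,y\in A$. Then $r$ satisfies the $D$-equation $r_{12}*r_{13}=r_{13}\prec r_{23}+r_{23}\succ r_{12}$ if and only if $$\mathcal B(x*y,z)=\mathcal B(y,z\prec x)+\mathcal B(x,y\succ z)\quad\text{for all }x,y,z\in A.$$
   Context: A dendriform algebra is a vector space with bilinear products $\prec,\succ$ such that, writing $x*y=x\prec y+x\succ y$: $(x\prec y)\prec z=x\prec(y*z)$, $(x\succ y)\prec z=x\succ(y\prec z)$, $x\succ(y\succ z)=(x*y)\succ z$. Symmetric means $\sigma(r)=r$ where $\sigma(u\otimes v)=v\otimes u$. $r$ is regarded as a linear map $A^*\to A$ by $\langle u^*\otimes v^*,r\rangle=\langle u^*,r(v^* )\rangle$. For $r=\sum_i x_i\otimes y_i$: $r_{12}*r_{13}=\sum_{i,j}x_i*x_j\otimes y_i\otimes y_j$, $r_{13}\prec r_{23}=\sum_{i,j}x_i\otimes x_j\otimes y_i\prec y_j$, $r_{23}\succ r_{12}=\sum_{i,j}x_j\otimes x_i\succ y_j\otimes y_i$. *)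

(* A finite-dimensional algebra over a field F is modelled as
   A := 'rV[F]_n with standard basis e_i := delta_mx 0 i; tensors in A⊗A are
   n×n coefficient matrices, tensors in A⊗A⊗A are functions 'I_n^3 -> F. *)
From HB Require Import structures.
From mathcomp Require Import all_boot all_order all_algebra.
Set Implicit Arguments. Unset Strict Implicit. Unset Printing Implicit Defensive.
Import Order.TTheory GRing.Theory Num.Theory.
Local Open Scope ring_scope.

Section Dend.
Variables (F : fieldType) (n : nat).
Local Notation A := 'rV[F]_n.

Definition bilinear_op (op : A -> A -> A) : Prop :=
  (forall (a : F) (x y z : A), op (a *: x + y) z = a *: op x z + op y z) /\
  (forall (a : F) (x y z : A), op x (a *: y + z) = a *: op x y + op x z).

Definition dstar (prec succ : A -> A -> A) (x y : A) : A := prec x y + succ x y.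

Definition dendriform (prec succ : A -> A -> A) : Prop :=
  bilinear_op prec /\ bilinear_op succ /\
  (forall x y z, prec (prec x y) z = prec x (dstar prec succ y z)) /\
  (forall x y z, prec (succ x y) z = succ x (prec y z)) /\
  (forall x y z, succ x (succ y z) = succ (dstar prec succ x y) z).

Definition ebas (i : 'I_n) : A := delta_mx 0 i.

(* r = \sum_{i,j} r i j e_i ⊗ e_j *)
Definition tsymmetric (r : 'M[F]_n) : Prop := r^T = r.

(* dual pairing, elements of A^* in dual-basis coordinates *)
Definition dpair (u : 'rV[F]_n) (x : A) : F := \sum_i u 0 i * x 0 i.

(* r as a map A^* -> A :  <u ⊗ v, r> = <u, r(v)>  *)
Definition rmap (r : 'M[F]_n) (v : 'rV[F]_n) : A := v *m r^T.

Definition r_nondegenerate (r : 'M[F]_n) : Prop := bijective (rmap r).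

(* inverse of rmap r (when r is nondegenerate) *)
Definition rinv (r : 'M[F]_n) (x : A) : 'rV[F]_n := x *m invmx (r^T).

Definition formBr (r : 'M[F]_n) (x y : A) : F := dpair (rinv r x) y.

(* coefficients (p,q,s) of 3-tensors on the basis e_p ⊗ e_q ⊗ e_s *)
Definition r12_r13 (mul : A -> A -> A) (r : 'M[F]_n) (p q s : 'I_n) : F :=
  \sum_i \sum_k r i q * r k s * (mul (ebas i) (ebas k)) 0 p.
Definition r13_r23 (mul : A -> A -> A) (r : 'M[F]_n) (p q s : 'I_n) : F :=
  \sum_b \sum_d r p b * r q d * (mul (ebas b) (ebas d)) 0 s.
Definition r23_r12 (mul : A -> A -> A) (r : 'M[F]_n) (p q s : 'I_n) : F :=
  \sum_a \sum_d r p d * r a s * (mul (ebas a) (ebas d)) 0 q.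

Definition D_equation (prec succ : A -> A -> A) (r : 'M[F]_n) : Prop :=
  forall p q s, r12_r13 (dstar prec succ) r p q s =
                r13_r23 prec r p q s + r23_r12 succ r p q s.
End Dend.

From HB Require Import structures.
From mathcomp Require Import all_boot all_order all_algebra.
Set Implicit Arguments. Unset Strict Implicit. Unset Printing Implicit Defensive.
Import GRing.Theory.
Local Open Scope ring_scope.

(* Write r_pa for the coefficients of r.  Since r is symmetric, r is the
   inverse of the Gram matrix of B:  sum_c r_sc B(e_c, y) = y_s  and
   sum_a r_pa B(x, e_a) = x_p.  Using these contractions, the (p,q,s)
   coefficient of each side of the D-equation is the triple contraction
     sum_a r_pa sum_b r_qb sum_c r_sc T(e_b, e_c, e_a)
   of the corresponding side T of the identity for B, evaluated on basis
   vectors.  As r is invertible this contraction is injective, so the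
   D-equation is equivalent to the identity on basis vectors; both sides of
   the identity being trilinear (only bilinearity of ≺ and ≻ is used), this
   is equivalent to the identity for all x, y, z. *)

Section LinearForms.
Variables (F : fieldType) (n : nat).
Local Notation A := 'rV[F]_n.
Local Notation e := (ebas F).

Definition linear_form (f : A -> F) : Prop :=
  forall (a : F) (x y : A), f (a *: x + y) = a * f x + f y.

Definition linear_map (g : A -> A) : Prop :=
  forall (a : F) (x y : A), g (a *: x + y) = a *: g x + g y.

Lemma linear_form0 f : linear_form f -> f 0 = 0.
Proof.
move=> f_lin; have := f_lin 1 0 0; rewrite scaler0 addr0 mul1r => f0.
by apply: (@addrI _ (f 0)); rewrite addr0 -f0.
Qed.

Lemma linear_form_basis f : linear_form f ->
  forall x, f x = \sum_i x 0 i * f (e i).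
Proof.
move=> f_lin x; rewrite {1}(row_sum_delta x).
elim/big_rec2: _ => [|i y1 y2 _ <-]; first exact: linear_form0.
by rewrite f_lin.
Qed.

Lemma linear_form_ext f g : linear_form f -> linear_form g ->
  (forall i, f (e i) = g (e i)) -> forall x, f x = g x.
Proof.
move=> f_lin g_lin fg x; rewrite (linear_form_basis f_lin) (linear_form_basis g_lin).
by apply: eq_bigr => i _; rewrite fg.
Qed.

Lemma linear_formD f g : linear_form f -> linear_form g ->
  linear_form (fun x => f x + g x).
Proof. by move=> f_lin g_lin a x y; rewrite f_lin g_lin mulrDr addrACA. Qed.

Lemma linear_form_comp f g : linear_form f -> linear_map g ->
  linear_form (fun x => f (g x)).
Proof. by move=> f_lin g_lin a x y; rewrite g_lin f_lin. Qed.

Lemma bilinear_op_l (op : A -> A -> A) v : bilinear_op op -> linear_map (op^~ v).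
Proof. by case=> opl _ a x y; apply: opl. Qed.

Lemma bilinear_op_r (op : A -> A -> A) v : bilinear_op op -> linear_map (op v).
Proof. by case=> _ opr a x y; apply: opr. Qed.

Lemma dstar_bilinear (prec succ : A -> A -> A) :
  bilinear_op prec -> bilinear_op succ -> bilinear_op (dstar prec succ).
Proof.
move=> [pl pr] [sl sr]; split=> a x y z; rewrite /dstar.
  by rewrite pl sl scalerDr addrACA.
by rewrite pr sr scalerDr addrACA.
Qed.

Definition trilinear (T : A -> A -> A -> F) : Prop :=
  [/\ forall y z, linear_form (fun x => T x y z),
      forall x z, linear_form (fun y => T x y z) &
      forall x y, linear_form (fun z => T x y z)].

Lemma trilinear_ext T T' : trilinear T -> trilinear T' ->
  (forall a b c, T (e a) (e b) (e c) = T' (e a) (e b) (e c)) ->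
  forall x y z, T x y z = T' x y z.
Proof.
move=> [T1 T2 T3] [T'1 T'2 T'3] TT' x y z.
apply: (linear_form_ext (T1 y z) (T'1 y z)) => a.
apply: (linear_form_ext (T2 (e a) z) (T'2 (e a) z)) => b.
exact: (linear_form_ext (T3 (e a) (e b)) (T'3 (e a) (e b))).
Qed.

End LinearForms.

Section ContractionByR.
Variables (F : fieldType) (n : nat) (r : 'M[F]_n).
Local Notation A := 'rV[F]_n.
Local Notation e := (ebas F).
Local Notation B := (formBr r).

Lemma formBr_linear_l y : linear_form (fun x => B x y).
Proof.
move=> a x z; rewrite /formBr /rinv mulmxDl -scalemxAl /dpair mulr_sumr.
by rewrite -big_split /=; apply: eq_bigr => i _; rewrite !mxE mulrDl mulrA.
Qed.

Lemma formBr_linear_r x : linear_form (B x).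
Proof.
move=> a y z; rewrite /formBr /dpair mulr_sumr -big_split /=.
by apply: eq_bigr => i _; rewrite !mxE mulrDr mulrCA.
Qed.

Definition contract3 (T : 'I_n -> 'I_n -> 'I_n -> F) (p q s : 'I_n) : F :=
  \sum_a r p a * (\sum_b r q b * (\sum_c r s c * T b c a)).

(* Contraction against an invertible matrix is injective; this is where the
   nondegeneracy of r enters. *)
Lemma contract_inj (G H : 'I_n -> F) : r \in unitmx ->
  (forall p, \sum_a r p a * G a = \sum_a r p a * H a) -> forall a, G a = H a.
Proof.
move=> r_unit rGH.
have : \row_a G a *m r^T = \row_a H a *m r^T.
  apply/rowP => p; rewrite !mxE.
  transitivity (\sum_a r p a * G a); first by apply: eq_bigr => a _; rewrite !mxE mulrC.
  by rewrite rGH; apply: eq_bigr => a _; rewrite !mxE mulrC.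
move=> /(congr1 (mulmx^~ (invmx r^T))); rewrite !mulmxK ?unitmx_tr // => /rowP GH a.
by have := GH a; rewrite !mxE.
Qed.

Lemma contract3_inj T T' : r \in unitmx ->
  (forall p q s, contract3 T p q s = contract3 T' p q s) ->
  forall b c a, T b c a = T' b c a.
Proof.
move=> r_unit TT' b c a; move: c; apply: (contract_inj r_unit) => s.
move: b; apply: (contract_inj r_unit) => q.
by move: a; apply: (contract_inj r_unit) => p; apply: TT'.
Qed.

Lemma swap_sum (f g : 'I_n -> F) (X : 'I_n -> 'I_n -> F) :
  \sum_a f a * (\sum_b g b * X a b) = \sum_b g b * (\sum_a f a * X a b).
Proof.
under eq_bigr do rewrite mulr_sumr.
under [RHS]eq_bigr do rewrite mulr_sumr.
rewrite exchange_big /=; apply: eq_bigr => b _; apply: eq_bigr => a _.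
by rewrite mulrCA.
Qed.

Hypothesis r_sym : r^T = r.
Hypothesis r_unit : r \in unitmx.

Lemma r_symE i j : r i j = r j i.
Proof. by rewrite -{1}r_sym mxE. Qed.

(* r is the inverse of the Gram matrix of B, in either argument. *)
Lemma contract_formBr_l s y : \sum_c r s c * B (e c) y = y 0 s.
Proof.
transitivity (B (row s r) y).
  by rewrite (linear_form_basis (formBr_linear_l y)); apply: eq_bigr => c _; rewrite mxE.
rewrite /formBr /rinv -{1}r_sym rowE mulmxK ?unitmx_tr //.
rewrite /dpair (bigD1 s) //= big1 => [|i ne_is]; first by rewrite !mxE !eqxx mul1r addr0.
by rewrite !mxE (negbTE ne_is) andbF mul0r.
Qed.

Lemma contract_formBr_r p x : \sum_a r p a * B x (e a) = x 0 p.
Proof.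
transitivity (B x (row p r)).
  by rewrite (linear_form_basis (formBr_linear_r x)); apply: eq_bigr => c _; rewrite mxE.
have -> : B x (row p r) = (rinv r x *m (row p r)^T) 0 0.
  by rewrite /formBr /dpair !mxE; apply: eq_bigr => i _; rewrite !mxE.
by rewrite /rinv tr_row colE mulmxA mulmxKV ?unitmx_tr // -colE mxE.
Qed.

Lemma r12_r13_contract (mul : A -> A -> A) p q s :
  r12_r13 mul r p q s = contract3 (fun b c a => B (mul (e b) (e c)) (e a)) p q s.
Proof.
rewrite /contract3 swap_sum; under eq_bigr do rewrite swap_sum.
under eq_bigr do under eq_bigr do rewrite contract_formBr_r.
apply: eq_bigr => i _; rewrite mulr_sumr; apply: eq_bigr => k _.
by rewrite mulrA (r_symE i q) (r_symE k s).
Qed.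

Lemma r13_r23_contract (prec : A -> A -> A) p q s :
  r13_r23 prec r p q s = contract3 (fun b c a => B (e c) (prec (e a) (e b))) p q s.
Proof.
rewrite /contract3; under [RHS]eq_bigr do under eq_bigr do rewrite contract_formBr_l.
apply: eq_bigr => b _; rewrite mulr_sumr; apply: eq_bigr => d _.
by rewrite mulrA.
Qed.

Lemma r23_r12_contract (succ : A -> A -> A) p q s :
  r23_r12 succ r p q s = contract3 (fun b c a => B (e b) (succ (e c) (e a))) p q s.
Proof.
rewrite /contract3; under [RHS]eq_bigr do rewrite swap_sum.
under [RHS]eq_bigr do under eq_bigr do rewrite contract_formBr_l.
rewrite /r23_r12 exchange_big /=; apply: eq_bigr => d _; rewrite mulr_sumr.
by apply: eq_bigr => a _; rewrite mulrA (r_symE a s).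
Qed.

Lemma contract3D T T' p q s :
  contract3 (fun b c a => T b c a + T' b c a) p q s =
  contract3 T p q s + contract3 T' p q s.
Proof.
rewrite /contract3 -big_split /=; apply: eq_bigr => a _.
rewrite -mulrDr -big_split /=; congr (_ * _); apply: eq_bigr => b _.
by rewrite -mulrDr -big_split /=; congr (_ * _); apply: eq_bigr => c _; rewrite mulrDr.
Qed.

End ContractionByR.

Lemma nondegenerate_unitmx (F : fieldType) (n : nat) (r : 'M[F]_n) :
  r_nondegenerate r -> r \in unitmx.
Proof.
move=> r_bij; rewrite -unitmx_tr -row_free_unit; apply: inj_row_free => v vr0.
by apply: (bij_inj r_bij); rewrite /rmap vr0 mul0mx.
Qed.

Theorem theorem4p4p7 (F : fieldType) (n : nat)
  (prec succ : 'rV[F]_n -> 'rV[F]_n -> 'rV[F]_n) (r : 'M[F]_n) :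
  dendriform prec succ -> tsymmetric r -> r_nondegenerate r ->
  (D_equation prec succ r <->
   forall x y z : 'rV[F]_n,
     formBr r (dstar prec succ x y) z =
     formBr r y (prec z x) + formBr r x (succ y z)).
Proof.
move=> [prec_bil [succ_bil _]] r_sym /nondegenerate_unitmx r_unit.
pose L x y z := formBr r (dstar prec succ x y) z.
pose R x y z := formBr r y (prec z x) + formBr r x (succ y z).
have coeffs p q s :
  r12_r13 (dstar prec succ) r p q s =
    contract3 r (fun b c a => L (ebas F b) (ebas F c) (ebas F a)) p q s /\
  r13_r23 prec r p q s + r23_r12 succ r p q s =
    contract3 r (fun b c a => R (ebas F b) (ebas F c) (ebas F a)) p q s.
  by rewrite r12_r13_contract // r13_r23_contract // r23_r12_contract // contract3D.
have L_tri : trilinear L.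
  split=> [y z|x z|x y]; [apply: linear_form_comp (formBr_linear_l _ _) _ ..|].
  - exact: bilinear_op_l (dstar_bilinear prec_bil succ_bil).
  - exact: bilinear_op_r (dstar_bilinear prec_bil succ_bil).
  - exact: formBr_linear_r.
have R_tri : trilinear R.
  split=> [y z|x z|x y]; apply: linear_formD.
  - exact: linear_form_comp (formBr_linear_r _ _) (bilinear_op_r _ prec_bil).
  - exact: formBr_linear_l.
  - exact: formBr_linear_l.
  - exact: linear_form_comp (formBr_linear_r _ _) (bilinear_op_l _ succ_bil).
  - exact: linear_form_comp (formBr_linear_r _ _) (bilinear_op_l _ prec_bil).
  - exact: linear_form_comp (formBr_linear_r _ _) (bilinear_op_r _ succ_bil).
split=> [HD | HB p q s].
- apply: (trilinear_ext L_tri R_tri); apply: (contract3_inj r_unit) => p q s.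
  by have [<- <-] := coeffs p q s; apply: HD.
- have [-> ->] := coeffs p q s.
  by rewrite /contract3; do 3!(apply: eq_bigr => ? _; congr (_ * _)); apply: HB.
Qed.
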